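(* Let $n\geq 1$ and for $1\leq k\leq n$ let $c(k)$ denote the number of Boolean functions on $n$ variables that are canalizing for exactly $k$ variables. Then: for $1<k<n$, $c(k)=\sum_{r=k}^n\binom{r}{k}(-1)^{r-k}\binom{n}{r}2^{r+1}\bigl(2^{2^{n-r}}-1\bigr)$; for $1<k=n$, $c(n)=2+2^{n+1}$; for $1=k<n$, $c(1)=2n\bigl(2^{1+2^{n-1}}-3\bigr)+\sum_{r=2}^n r(-1)^{r-1}\binom{n}{r}2^{r+1}\bigl(2^{2^{n-r}}-1\bigr)$; for $1=k=n$, $c(1)=4$.
   Context: A Boolean function on $n$ variables is a map $f:\{0,1\}^n\to\{0,1\}$, variables indexed by $[n]=\{0,\dots,n-1\}$. $f$ is canalizing for variable $i$ if there exist $s,v\in\{0,1\}$ such that for all $x\in\{0,1\}^n$, $x_i=s$ implies $f(x)=v$. ''Canalizing for exactly $k$ variables'' means the set of $i\in[n]$ for which $f$ is canalizing for variable $i$ has exactly $k$ elements. *)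

From mathcomp Require Import all_boot all_order all_algebra.
Set Implicit Arguments. Unset Strict Implicit. Unset Printing Implicit Defensive.

Definition boolfun (n : nat) := {ffun {ffun 'I_n -> bool} -> bool}.

Definition canalizing (n : nat) (f : boolfun n) (i : 'I_n) : bool :=
  [exists s : bool, exists v : bool, forall x : {ffun 'I_n -> bool}, (x i == s) ==> (f x == v)].

Definition canal_vars (n : nat) (f : boolfun n) : {set 'I_n} :=
  [set i | canalizing f i].

Definition ccount (n k : nat) : nat :=
  #|[set f : boolfun n | #|canal_vars f| == k]|.

From mathcomp Require Import all_boot all_order all_algebra ring zify.
Set Implicit Arguments. Unset Strict Implicit. Unset Printing Implicit Defensive.
Import GRing.Theory.

(* Let S(r) count the pairs (R, f) with #|R| = r and f canalizing for every
   variable of R.  Counting by f gives S(r) = sum_j 'C(j, r) c(j), so c is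
   recovered from S by binomial inversion.  If r >= 2, a nonconstant f
   canalizing on R has a single canalized value v (two distinct variables can
   be fixed at once) and a single canalizing input s_i for each i in R (both
   inputs would make f constant).  Hence f = v on the inputs that agree with s
   somewhere on R and f is arbitrary on the 2^(n-r) others, except that f = v
   there too is the constant v.  Adding the two constants,
   S(r) = 'C(n, r) (2 + 2^(r+1) (2^(2^(n-r)) - 1)).  For r = 1,
   inclusion-exclusion over the halves x_i = 1 and x_i = 0 gives
   S(1) = n (4 * 2^(2^(n-1)) - 4). *)

Lemma card_ffun_fixed_on (aT rT : finType) (X : {set aT}) (c : aT -> rT) :
  #|[set y : {ffun aT -> rT} | [forall i in X, y i == c i]]| = #|rT| ^ #|~: X|.
Proof.
pose F i : pred rT := if i \in X then pred1 (c i) else predT.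
rewrite (@eq_card _ _ (family F)) => [|y]; last first.
  rewrite inE; apply/forall_inP/familyP => [yX i|yF i iX].
    by rewrite /F; case: ifP => // /yX.
  by have := yF i; rewrite /F iX.
rewrite card_family foldrE big_map big_enum /= -prod_nat_const.
rewrite (bigID (mem X)) /= big1 ?mul1n => [|i iX]; last by rewrite /F iX card1.
by apply: eq_big => [i | i /negbTE iX]; rewrite ?inE // /F iX.
Qed.

Lemma card_bigcup_disjoint (I T : finType) (P : {pred I}) (F : I -> {set T}) :
    {in P &, forall i j, i != j -> [disjoint F i & F j]} ->
  #|\bigcup_(i in P) F i| = \sum_(i in P) #|F i|.
Proof.
move=> disjF; pose G i := if i \in P then F i else set0.
have disjG i j : i != j -> [disjoint G i & G j].
  rewrite /G -setI_eq0; case: ifP => Pi; case: ifP => Pj; rewrite ?set0I ?setI0 //.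
  by rewrite setI_eq0; apply: disjF.
have -> : \bigcup_(i in P) F i = \bigcup_i G i.
  by rewrite (big_mkcond (mem P)).
rewrite -sum1_card partition_disjoint_bigcup // [RHS]big_mkcond.
by apply: eq_bigr => i _; rewrite sum1_card /G; case: ifP; rewrite ?cards0.
Qed.

Lemma sum_draws_const (T : finType) r c :
  \sum_(A : {set T} | #|A| == r) c = 'C(#|T|, r) * c.
Proof.
rewrite -card_draws -sum1_card big_distrl /=.
by apply: eq_big => [A | A _]; rewrite ?inE ?mul1n.
Qed.

Lemma mul_bin_bin j r k : k <= r -> 'C(j, r) * 'C(r, k) = 'C(j, k) * 'C(j - k, r - k).
Proof.
move=> le_kr; have [lt_jk | le_kj] := ltnP j k.
  by rewrite !(@bin_small j) ?muln0 ?mul0n //; lia.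
have [le_rj | lt_jr] := leqP r j; last first.
  by rewrite bin_small // (@bin_small (j - k)) ?muln0 //; lia.
have fact_pos : 0 < k`! * (r - k)`! * (j - r)`! by rewrite !muln_gt0 !fact_gt0.
apply/eqP; rewrite -(eqn_pmul2r fact_pos); apply/eqP.
have le_rj' : r - k <= j - k by lia.
have := bin_fact le_rj'; have -> : j - k - (r - k) = j - r by lia.
move=> Cjkrk; transitivity j`!.
  by rewrite -(bin_fact le_rj) -(bin_fact le_kr); ring.
by rewrite -(bin_fact le_kj) -Cjkrk; ring.
Qed.

Section BinomialInversion.

Local Open Scope ring_scope.

Lemma sum_sign_bin (R : pzRingType) m N : (m <= N)%N ->
  \sum_(0 <= i < N.+1) (-1) ^+ i *+ 'C(m, i) = (m == 0)%:R :> R.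
Proof.
move=> le_mN; rewrite (big_cat_nat _ (n := m.+1)) //= [X in _ + X]big1_seq; last first.
  by move=> i /andP[_]; rewrite mem_iota => /andP[lt_mi _]; rewrite bin_small.
have := exprBn_comm m (commr1 (1 : R)); rewrite subrr expr0n => ->.
by rewrite addr0 big_mkord; apply: eq_bigr => i _; rewrite !expr1n !mulr1.
Qed.

Lemma sum_sign_bin_bin (R : pzRingType) n j k : (j <= n)%N ->
  \sum_(k <= r < n.+1) (-1) ^+ (r - k) *+ ('C(r, k) * 'C(j, r)) = (j == k)%:R :> R.
Proof.
move=> le_jn; have [lt_jk | le_kj] := ltnP j k.
  rewrite big1_seq ?ltn_eqF // => r /andP[_]; rewrite mem_iota => /andP[le_kr _].
  by rewrite (@bin_small j r) ?muln0 //; apply: leq_trans le_kr.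
transitivity ((\sum_(0 <= i < (n - k).+1) (-1) ^+ i *+ 'C(j - k, i)) *+ 'C(j, k) : R).
  rewrite -sumrMnl -subSn ?(leq_trans le_kj) // -{1}[k]add0n big_addn.
  by apply: eq_bigr => i _; rewrite mulnC mul_bin_bin ?leq_addl // addnK mulnC mulrnA.
rewrite sum_sign_bin ?leq_sub2r // subn_eq0.
have [-> | ne_jk] := eqVneq j k; first by rewrite leqnn binn.
by rewrite leqNgt ltn_neqAle eq_sym ne_jk le_kj mul0rn.
Qed.

Lemma binomial_inversion (R : pzRingType) (e : nat -> R) n k : (k <= n)%N ->
  \sum_(k <= r < n.+1) (-1) ^+ (r - k) *+ 'C(r, k) * (\sum_(j < n.+1) e j *+ 'C(j, r)) = e k.
Proof.
move=> le_kn; transitivity (\sum_(j < n.+1) e j *+ (j == k :> nat)).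
  under eq_bigr do rewrite big_distrr /=.
  rewrite exchange_big; apply: eq_bigr => j _.
  rewrite -mulr_natr -(sum_sign_bin_bin R k (ltnSE (ltn_ord j))) big_distrr /=.
  apply: eq_bigr => r _.
  by rewrite mulrnAl mulrnAr -mulrnA mulnC mulrnAr commr_sign.
by under eq_bigr do rewrite mulrb; rewrite -big_mkcond big_ord1_eq ltnS le_kn.
Qed.

End BinomialInversion.

Section Canalization.

Variable n : nat.
Notation input := {ffun 'I_n -> bool}.
Implicit Types (f : boolfun n) (R : {set 'I_n}) (s x : input) (i j : 'I_n) (a v : bool).

Definition canalizes f i a v := [forall x : input, (x i == a) ==> (f x == v)].

Lemma canalizesP f i a v : reflect (forall x, x i = a -> f x = v) (canalizes f i a v).
Proof.
apply: (iffP forallP) => [fiav x /eqP xia | fiav x]; first exact/eqP/(implyP (fiav x)).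
by apply/implyP => /eqP/fiav ->.
Qed.

Definition cst c : boolfun n := [ffun _ => c].
Definition consts := [set cst false; cst true].

Lemma card_consts : #|consts| = 2.
Proof. by rewrite cards2; case: eqP => // /ffunP/(_ [ffun=> false]); rewrite !ffunE. Qed.

Lemma canalizes_cst i a c : canalizes (cst c) i a c.
Proof. by apply/canalizesP => x _; rewrite ffunE. Qed.

Lemma canalizes_value_eq f i j a b v w : (i != j) || (a == b) ->
  canalizes f i a v -> canalizes f j b w -> v = w.
Proof.
move=> compat /canalizesP fiav /canalizesP fjbw.
pose x : input := [ffun l => if l == i then a else b].
rewrite -(fiav x) ?(fjbw x) // ffunE ?eqxx //.
by have [eq_ji | //] := eqVneq j i; move: compat; rewrite eq_ji eqxx => /eqP.
Qed.

Lemma canalizes_negb_cst f i a v :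
  canalizes f i a v -> canalizes f i (~~ a) v -> f = cst v.
Proof.
move=> /canalizesP fiav /canalizesP finav; apply/ffunP => x; rewrite ffunE.
have [/fiav | /finav] // : x i = a \/ x i = ~~ a by case: (x i); case: (a); auto.
Qed.

Definition canalizing_on R := [set f | R \subset canal_vars f].

Definition canal_with R s v := [set f | [forall i in R, canalizes f i (s i) v]].

(* Canalizing inputs are normalised to [false] outside R, so that a nonconstant
   f determines them uniquely (canal_with_inj). *)
Definition inputs_on R := [set s : input | [forall i in ~: R, s i == false]].

Lemma card_inputs_on R : #|inputs_on R| = 2 ^ #|R|.
Proof. by rewrite card_ffun_fixed_on setCK card_bool. Qed.

Lemma canal_withE R s v :
  canal_with R s v =
    [set f : boolfun n | [forall x in [set x : input | [exists i in R, x i == s i]], f x == v]].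
Proof.
apply/setP => f; rewrite !inE; apply/forall_inP/forall_inP => [fRsv x | fsv i iR].
  rewrite inE => /exists_inP[i iR /eqP xis].
  by apply/eqP; apply: canalizesP xis; apply: fRsv.
apply/canalizesP => x xis; apply/eqP/fsv.
by rewrite inE; apply/exists_inP; exists i => //; apply/eqP.
Qed.

Lemma card_canal_with R s v : #|canal_with R s v| = 2 ^ 2 ^ (n - #|R|).
Proof.
rewrite canal_withE card_ffun_fixed_on card_bool.
have -> : ~: [set x : input | [exists i in R, x i == s i]] =
          [set x : input | [forall i in R, x i == ~~ s i]].
  apply/setP => x; rewrite !inE negb_exists; apply: eq_forallb => i.
  by case: (i \in R); case: (x i); case: (s i).
by rewrite (card_ffun_fixed_on _ (fun i => ~~ s i)) card_bool cardsCs setCK card_ord.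
Qed.

Lemma canal_with_consts R s v : R != set0 -> canal_with R s v :&: consts = [set cst v].
Proof.
case/set0Pn => i iR; apply/setP => f; rewrite !inE; apply/idP/eqP => [|->].
  case/andP => /forall_inP/(_ i iR)/canalizesP fisv.
  by case/orP => /eqP fc; rewrite fc; congr cst; rewrite -(fisv s) // fc ffunE.
apply/andP; split; first by apply/forall_inP => j _; apply: canalizes_cst.
by case: v; rewrite eqxx ?orbT.
Qed.

Lemma card_canal_with_nonconst R s v : R != set0 ->
  #|canal_with R s v :\: consts| = 2 ^ 2 ^ (n - #|R|) - 1.
Proof. by move=> R0; rewrite cardsD canal_with_consts // cards1 card_canal_with. Qed.

Lemma consts_sub_canalizing_on R : consts \subset canalizing_on R.
Proof.
apply/subsetP => f; rewrite !inE => /orP[] /eqP->; apply/subsetP => i _;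
  by rewrite inE; apply/existsP; exists true; apply/existsP; eexists; apply: canalizes_cst.
Qed.

Lemma canal_with_sub R s v : canal_with R s v \subset canalizing_on R.
Proof.
apply/subsetP => f /[!inE] /forall_inP fRsv; apply/subsetP => i iR.
by rewrite inE; apply/existsP; exists (s i); apply/existsP; exists v; apply: fRsv.
Qed.

Lemma canalizing_on_canal_with R f : f \in canalizing_on R ->
  exists2 s, s \in inputs_on R & exists v, f \in canal_with R s v.
Proof.
rewrite inE => /subsetP fR.
pose s : input := [ffun i => (i \in R) && [exists v, canalizes f i true v]].
have s_on_R : s \in inputs_on R.
  by rewrite inE; apply/forall_inP => i; rewrite inE ffunE => /negbTE->.
have [R0 | [i0 i0R]] := set_0Vmem R.
  by exists s => //; exists true; rewrite inE R0; apply/forall_inP => i; rewrite inE.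
have fs i : i \in R -> exists v, canalizes f i (s i) v.
  move=> iR; rewrite ffunE iR /=.
  case: (boolP [exists v, canalizes f i true v]) => [/existsP // | not_true].
  move: (fR i iR); rewrite inE => /existsP[[] /existsP[v fiav]]; last by exists v.
  by case/negP: not_true; apply/existsP; exists v.
have [v0 fv0] := fs i0 i0R; exists s => //; exists v0.
rewrite inE; apply/forall_inP => i iR; have [v fv] := fs i iR.
by rewrite (canalizes_value_eq _ fv0 fv) //; case: eqVneq => //= ->.
Qed.

(* Fails for #|R| = 1: the function x |-> x i canalizes i with both inputs. *)
Lemma canal_with_inj R s s' v v' f : 1 < #|R| -> f \notin consts ->
    s \in inputs_on R -> s' \in inputs_on R ->
  f \in canal_with R s v -> f \in canal_with R s' v' -> (s, v) = (s', v').
Proof.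
case/card_gt1P => [i [j [iR jR ne_ij]]] f_nonconst /[!inE] /forall_inP s_on /forall_inP s'_on.
move=> /forall_inP fsv /forall_inP fs'v'.
have vv' : v = v' by apply: canalizes_value_eq (fsv i iR) (fs'v' j jR); rewrite ne_ij.
subst v'.
congr (_, _); apply/ffunP => k; have [kR | kR] := boolP (k \in R).
  apply: contraNeq f_nonconst => ne_s; rewrite !inE (canalizes_negb_cst (fsv k kR)).
    by case: (v); rewrite eqxx ?orbT.
  have -> : ~~ s k = s' k by move: ne_s; case: (s k) (s' k) => [] [].
  exact: fs'v'.
by rewrite (eqP (s_on k _)) ?(eqP (s'_on k _)) ?inE.
Qed.

Lemma card_canalizing_on R : 1 < #|R| ->
  #|canalizing_on R| = 2 + 2 ^ #|R|.+1 * (2 ^ 2 ^ (n - #|R|) - 1).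
Proof.
move=> R_gt1; have R0 : R != set0 by rewrite -card_gt0 ltnW.
rewrite -(cardsID consts) (setIidPr (consts_sub_canalizing_on R)) card_consts.
have -> : canalizing_on R :\: consts =
          \bigcup_(p in setX (inputs_on R) setT) (canal_with R p.1 p.2 :\: consts).
  apply/setP => f; apply/setDP/bigcupP => [[/canalizing_on_canal_with[s s_on [v fsv]] f_nc]|].
    by exists (s, v); [rewrite in_setX s_on in_setT | apply/setDP].
  case=> -[s v] _ /setDP[fsv f_nc]; split => //.
  exact: subsetP (canal_with_sub R s v) f fsv.
rewrite card_bigcup_disjoint => [|[s v] [s' v'] /setXP[s_on _] /setXP[s'_on _] ne].
  rewrite (eq_bigr _ (fun p _ => card_canal_with_nonconst p.1 p.2 R0)) sum_nat_const.
  by rewrite cardsX card_inputs_on cardsT card_bool expnS [2 * _]mulnC.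
rewrite -setI_eq0; apply/set0Pn => -[f /setIP[/setDP[fsv f_nc] /setDP[fs'v' _]]].
by move/eqP: ne; apply; apply: canal_with_inj fsv fs'v'.
Qed.

Lemma canal_with1 i s v : canal_with [set i] s v = [set f | canalizes f i (s i) v].
Proof.
apply/setP => f; rewrite !inE.
by apply/forall_inP/idP => [/(_ i (set11 i)) // | fisv j /set1P->].
Qed.

Lemma card_canalizes i a v : #|[set f | canalizes f i a v]| = 2 ^ 2 ^ (n - 1).
Proof. by have := card_canal_with [set i] [ffun=> a] v; rewrite canal_with1 ffunE cards1. Qed.

Definition half_const i a := [set f | canalizes f i a false || canalizes f i a true].

Lemma card_half_const i a : #|half_const i a| = 2 * 2 ^ 2 ^ (n - 1).
Proof.
have -> : half_const i a = [set f | canalizes f i a false] :|: [set f | canalizes f i a true].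
  by apply/setP => f; rewrite !inE.
rewrite cardsU !card_canalizes addnn -mul2n -[RHS]subn0; congr (_ - _).
apply/eqP; rewrite cards_eq0; apply/eqP/setP => f; rewrite !inE.
apply/negP => /andP[/canalizesP f0 /canalizesP f1].
have xa : [ffun=> a] i = a :> bool by rewrite ffunE.
by have := f1 _ xa; rewrite f0.
Qed.

Definition var_fun i (p : bool * bool) : boolfun n :=
  [ffun x : input => if x i then p.1 else p.2].

Lemma half_constIC i :
  half_const i true :&: half_const i false = [set var_fun i p | p in setT].
Proof.
apply/setP => f; rewrite !inE; apply/andP/imsetP => [[f1 f0] | [[b c] _ ->]].
  have [b /canalizesP fb] : exists b, canalizes f i true b.
    by case/orP: f1; eexists; eassumption.
  have [c /canalizesP fc] : exists c, canalizes f i false c.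
    by case/orP: f0; eexists; eassumption.
  exists (b, c) => //; apply/ffunP => x; rewrite ffunE /=.
  by case xi: (x i); [apply: fb | apply: fc].
by split; apply/orP; [case: b; [right | left] | case: c; [right | left]];
  apply/canalizesP => x; rewrite ffunE => ->.
Qed.

Lemma canalizing_half_const f i :
  canalizing f i = (f \in half_const i true) || (f \in half_const i false).
Proof.
rewrite !inE; apply/existsP/orP => [[[] /existsP[[] fav]] | [] /orP[] fav].
- by left; apply/orP; right.
- by left; apply/orP; left.
- by right; apply/orP; right.
- by right; apply/orP; left.
all: by eexists; apply/existsP; eexists; exact: fav.
Qed.

Lemma card_canalizing_on1 i : #|canalizing_on [set i]| = 4 * 2 ^ 2 ^ (n - 1) - 4.
Proof.
have -> : canalizing_on [set i] = half_const i true :|: half_const i false.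
  by apply/setP => f; rewrite in_setU -canalizing_half_const inE sub1set inE.
apply/eqP; rewrite -(eqn_add2r #|half_const i true :&: half_const i false|) cardsUI.
rewrite !card_half_const half_constIC card_imset ?cardsT ?card_prod ?card_bool.
  have : 0 < 2 ^ 2 ^ (n - 1) by rewrite expn_gt0.
  lia.
move=> [b c] [b' c'] /ffunP eq_bc.
by have := eq_bc [ffun=> true]; have := eq_bc [ffun=> false]; rewrite !ffunE /= => -> ->.
Qed.

End Canalization.

Definition canal_pairs n r := \sum_(R : {set 'I_n} | #|R| == r) #|canalizing_on R|.

Lemma canal_pairs_ccount n r : canal_pairs n r = \sum_(j < n.+1) ccount n j * 'C(j, r).
Proof.
transitivity (\sum_(f : boolfun n) 'C(#|canal_vars f|, r)).
  rewrite /canal_pairs; under eq_bigr do rewrite -sum1_card.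
  rewrite (exchange_big_dep predT) //=; apply: eq_bigr => f _.
  rewrite sum1_card -cards_draws; apply: eq_card => R.
  by rewrite unfold_in /= !inE andbC.
have cv_lt (f : boolfun n) : #|canal_vars f| < n.+1.
  by rewrite ltnS -[n in _ <= n]card_ord max_card.
rewrite (partition_big (fun f => inord #|canal_vars f| : 'I_n.+1) predT) //=.
apply: eq_bigr => j _; rewrite /ccount -sum1_card big_distrl /=.
by apply: eq_big => [f | f /eqP <-]; rewrite ?inE -?val_eqE /= ?mul1n inordK.
Qed.

Lemma canal_pairs_gt1 n r : 1 < r ->
  canal_pairs n r = 'C(n, r) * (2 + 2 ^ r.+1 * (2 ^ 2 ^ (n - r) - 1)).
Proof.
move=> r_gt1; rewrite /canal_pairs -[n in 'C(n, _)](card_ord n) -sum_draws_const.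
by apply: eq_bigr => R /eqP R_r; rewrite card_canalizing_on ?R_r.
Qed.

Lemma canal_pairs1 n : canal_pairs n 1 = n * (4 * 2 ^ 2 ^ (n - 1) - 4).
Proof.
rewrite /canal_pairs -[n in n * _]bin1 -[n in 'C(n, _)](card_ord n) -sum_draws_const.
by apply: eq_bigr => R /cards1P[i ->]; rewrite card_canalizing_on1.
Qed.

Local Open Scope ring_scope.

Lemma ccount_inversion (R : pzRingType) n k : (k <= n)%N ->
  (ccount n k)%:R =
    \sum_(k <= r < n.+1) (-1) ^+ (r - k) *+ 'C(r, k) * (canal_pairs n r)%:R :> R.
Proof.
move=> le_kn; rewrite -[LHS](binomial_inversion (fun j => (ccount n j)%:R) le_kn).
apply: eq_bigr => r _; rewrite canal_pairs_ccount natr_sum.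
by congr (_ * _); apply: eq_bigr => j _; rewrite natrM mulr_natr.
Qed.

Lemma ccount_gt1 n k : (1 < k <= n)%N ->
  (ccount n k)%:Z = 2 * (n == k)%:R
    + \sum_(k <= r < n.+1)
        ('C(r, k))%:Z * (-1) ^+ (r - k) * ('C(n, r))%:Z * 2 ^+ (r + 1) * (2 ^+ (2 ^ (n - r)) - 1).
Proof.
case/andP=> k_gt1 le_kn; rewrite -natz ccount_inversion //.
rewrite -(sum_sign_bin_bin int k (leqnn n)) mulr_sumr -big_split /=.
apply: eq_big_nat => r /andP[le_kr _]; rewrite canal_pairs_gt1 ?(leq_trans k_gt1) //.
by rewrite natrM natrD natrM natrB ?expn_gt0 // !natrX addn1; ring.
Qed.

Lemma ccount1 n : (0 < n)%N ->
  (ccount n 1)%:Z = n%:Z * (4 * 2 ^+ (2 ^ (n - 1)) - 4) + 2 * ((n == 1)%:R - n%:Z)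
    + \sum_(2 <= r < n.+1)
        r%:Z * (-1) ^+ (r - 1) * ('C(n, r))%:Z * 2 ^+ (r + 1) * (2 ^+ (2 ^ (n - r)) - 1).
Proof.
move=> n_gt0.
have sum_sign : \sum_(2 <= r < n.+1) (-1) ^+ (r - 1) *+ ('C(r, 1) * 'C(n, r)) =
                (n == 1)%:R - n%:Z.
  rewrite -(sum_sign_bin_bin int 1 (leqnn n)) [in RHS]big_ltn // subnn expr0 binn bin1.
  by rewrite mul1n -natz addrC addKr.
rewrite -natz ccount_inversion // big_ltn // canal_pairs1 -sum_sign mulr_sumr.
rewrite -addrA -big_split /=; congr (_ + _).
  by rewrite subnn expr0 binn natrM natrB ?leq_pmulr ?expn_gt0 // natrM natrX natz; ring.
apply: eq_big_nat => r /andP[r_gt1 _]; rewrite canal_pairs_gt1 // bin1.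
by rewrite natrM natrD natrM natrB ?expn_gt0 // !natrX addn1; ring.
Qed.

Theorem mainTheorem8 (n k : nat) (hn : (1 <= n)%N) (hk1 : (1 <= k)%N) (hkn : (k <= n)%N) :
  [/\ ((1 < k)%N -> (k < n)%N ->
        (ccount n k)%:Z =
        \sum_(k <= r < n.+1)
          ('C(r, k))%:Z * (-1) ^+ (r - k) * ('C(n, r))%:Z * 2 ^+ (r + 1)
            * (2 ^+ (2 ^ (n - r)) - 1)),
      ((1 < k)%N -> k = n -> (ccount n n)%:Z = 2 + 2 ^+ (n + 1)),
      (k = 1%N -> (1 < n)%N ->
        (ccount n 1)%:Z =
        (2 * n%:Z) * (2 ^+ (1 + 2 ^ (n - 1)) - 3)
        + \sum_(2 <= r < n.+1)
            r%:Z * (-1) ^+ (r - 1) * ('C(n, r))%:Z * 2 ^+ (r + 1)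
              * (2 ^+ (2 ^ (n - r)) - 1))
    & (k = 1%N -> n = 1%N -> (ccount n 1)%:Z = 4)].
Proof.
split => [k_gt1 lt_kn | k_gt1 eq_kn | _ n_gt1 | _ eq_n1].
- by rewrite ccount_gt1 ?k_gt1 ?(ltnW lt_kn) // gtn_eqF // mulr0 add0r.
- subst n; rewrite ccount_gt1 ?k_gt1 ?leqnn // eqxx mulr1n big_nat1 subnn binn expn0 expr1; ring.
- rewrite ccount1 ?(ltnW n_gt1) // gtn_eqF // mulr0n; congr (_ + _).
  by rewrite exprD expr1; ring.
- by subst n; rewrite ccount1 // big_geq.
Qed.
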